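(* Let $M$ be any infinite subset of a finite-dimensional real Banach space (viewed as a pointed metric space with the induced metric) and let $Y$ be an infinite-dimensional real Banach space. Then $\mathrm{A}(M,Y)\subsetneqq\mathrm{Lip}_0(M,Y)$.
   Context: Throughout, metric spaces are complete and pointed, with a base point $0$. $\mathrm{Lip}_0(M,Y)$ is the Banach space of Lipschitz maps $f:M\to Y$ with $f(0)=0$, normed by $\|f\|=\sup_{p\neq q}\|f(p)-f(q)\|/d(p,q)$. A map $f$ attains its norm toward $y\in Y$ if there is a sequence $(p_n,q_n)$ in $M\times M$ with $p_n\neq q_n$ such that $[f(p_n)-f(q_n)]/d(p_n,q_n)\to y$ and $\|y\|=\|f\|$; $\mathrm{A}(M,Y)$ is the set of $f$ attaining their norm toward some vector. *)

From HB Require Import structures.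
From mathcomp Require Import all_boot all_order all_algebra.
From mathcomp Require Import all_classical all_reals all_analysis.
Set Implicit Arguments. Unset Strict Implicit. Unset Printing Implicit Defensive.
Import Order.TTheory GRing.Theory Num.Theory.
Import numFieldNormedType.Exports.
Local Open Scope classical_set_scope.
Local Open Scope ring_scope.

Definition finite_dim (R : realType) (X : normedModType R) : Prop :=
  exists (n : nat) (e : 'I_n -> X),
    forall x : X, exists c : 'I_n -> R, x = \sum_(i < n) c i *: e i.

(* Maps are represented
   by functions X -> Y; only their values on M matter. *)
Definition Lip0 (R : realType) (X Y : normedModType R) (M : set X) (b : X)
  : set (X -> Y) :=
  [set f | f b = 0 /\
     exists L : R, forall p q, M p -> M q -> `|f p - f q| <= L * `|p - q| ].

Definition slopes (R : realType) (X Y : normedModType R) (M : set X)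
  (f : X -> Y) : set R :=
  [set r | exists p q, [/\ M p, M q, p <> q & r = `|f p - f q| / `|p - q| ] ].

Definition lipnorm (R : realType) (X Y : normedModType R) (M : set X)
  (f : X -> Y) : R := sup (slopes M f).

Definition attains_toward (R : realType) (X Y : normedModType R) (M : set X)
  (f : X -> Y) (y : Y) : Prop :=
  `|y| = lipnorm M f /\
  exists p q : nat -> X,
    (forall n, [/\ M (p n), M (q n) & p n <> q n]) /\
    (fun n => (`|p n - q n|)^-1 *: (f (p n) - f (q n))) @ \oo --> y.

Definition NA (R : realType) (X Y : normedModType R) (M : set X) (b : X)
  : set (X -> Y) :=
  [set f | Lip0 M b f /\ exists y : Y, attains_toward M f y].

From HB Require Import structures.
From mathcomp Require Import all_boot all_order all_algebra.
From mathcomp Require Import all_classical all_reals all_analysis.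
From mathcomp Require Import lra.
Set Implicit Arguments. Unset Strict Implicit. Unset Printing Implicit Defensive.
Import Order.TTheory GRing.Theory Num.Theory.
Import numFieldNormedType.Exports.
Local Open Scope classical_set_scope.
Local Open Scope ring_scope.

(* Riesz's lemma yields unit vectors u_n in Y, each at distance at least 1/2
   from the span of the previous ones.  An infinite closed subset M of a
   finite-dimensional space is either unbounded or has an accumulation point
   c in M; either way M contains points x_n whose distances t_n to c are
   lacunary.  On disjoint balls around the x_n place cones of slope amp n
   pointing along u_n, where amp n = 1 - 2^-(n+1) increases to 1.  Every
   difference quotient of this map lies within slack n of a multiple of a
   single u_n with coefficient at most amp n, while the quotient between
   x_(n+1) and c exceeds amp n + slack n.  Hence difference quotients whose
   norms tend to the Lipschitz norm must use infinitely many axes, and the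
   1/2-separation of the u_n prevents them from converging. *)

Section Sequences.
Variable R : realType.

Lemma increasing_seq_ge (phi : nat -> nat) :
  increasing_seq phi -> forall n, (n <= phi n)%N.
Proof.
move/increasing_seqP => phiS; elim=> [//|n IH].
exact: leq_ltn_trans IH (phiS n).
Qed.

Lemma increasing_seq_comp (phi psi : nat -> nat) :
  increasing_seq phi -> increasing_seq psi -> increasing_seq (phi \o psi).
Proof. by move=> iphi ipsi m n /=; rewrite iphi; apply: ipsi. Qed.

Lemma cvg_subseq (V : normedModType R) (w : nat -> V) (z : V) (phi : nat -> nat) :
  increasing_seq phi -> w @ \oo --> z -> w \o phi @ \oo --> z.
Proof.
move=> iphi; apply: cvg_comp => P [N _ NP]; exists N => // n /= Nn.
exact/NP/(leq_trans Nn)/increasing_seq_ge.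
Qed.

Lemma cvgn_unique (V : normedModType R) (w : nat -> V) (z z' : V) :
  w @ \oo --> z -> w @ \oo --> z' -> z = z'.
Proof. exact: (cvg_unique (@norm_hausdorff _ V)). Qed.

Lemma cvg_harmonic_dist (V : normedModType R) (w : nat -> V) (z : V) :
  (forall k, `|z - w k| < harmonic k) -> w @ \oo --> z.
Proof.
move=> wz; apply/cvgrPdist_lt => e e0.
have /cvgrPdist_lt/(_ e e0) := @cvg_harmonic R; apply: filterS => k.
by rewrite sub0r normrN ger0_norm ?harmonic_ge0 //; apply: lt_trans (wz k).
Qed.

Lemma bolzano_weierstrass_real (t : nat -> R) (C : R) : (forall k, `|t k| <= C) ->
  exists2 phi, increasing_seq phi & exists T : R, t \o phi @ \oo --> T.
Proof.
move=> tC; have [|phi iphi tphi] := @bolzano_weierstrass _ t.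
  exists C; split; first exact: num_real.
  by move=> D CD k _; apply: le_trans (tC k) (ltW CD).
by exists phi => //; exists (limn (t \o phi)).
Qed.

End Sequences.

Section FiniteDimension.
Variables (R : realType) (V : normedModType R).

Definition prefix_span (e : nat -> V) (n : nat) : set V :=
  [set v | exists c : nat -> R, v = \sum_(i < n) c i *: e i].

Definition bounded_seq_compact (S : set V) := forall (w : nat -> V) (B : R),
  (forall k, S (w k)) -> (forall k, `|w k| <= B) ->
  exists2 phi, increasing_seq phi & exists2 z, S z & w \o phi @ \oo --> z.

Lemma bounded_seq_compact_dist_gt0 (S : set V) (z : V) :
  bounded_seq_compact S -> ~ S z ->
  exists2 d, 0 < d & forall g, S g -> d <= `|z - g|.
Proof.
move=> Scpt Sz; apply: contrapT => nodist.
have near_z k : exists g, S g /\ `|z - g| < harmonic k.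
  apply: contrapT => nog; apply: nodist; exists (harmonic k) => [|h Sh].
    exact: harmonic_gt0.
  by rewrite leNgt; apply/negP => hz; apply: nog; exists h.
have [g gP] := choice near_z.
have gz : g @ \oo --> z by apply: cvg_harmonic_dist => k; case: (gP k).
have gB k : `|g k| <= `|z| + 1.
  rewrite -[g k](subKr z) (le_trans (ler_normB _ _)) // lerD2l ltW //.
  by apply: lt_le_trans (gP k).2 _; rewrite invf_le1 // ler1n.
have [phi iphi [z' Sz' gz']] := Scpt g _ (fun k => (gP k).1) gB.
by apply: Sz; rewrite (cvgn_unique (cvg_subseq iphi gz) gz').
Qed.

Lemma prefix_span0 e n : prefix_span e n 0.
Proof. by exists (fun=> 0); rewrite big1 // => i _; rewrite scale0r. Qed.

Lemma prefix_spanZ e n t g : prefix_span e n g -> prefix_span e n (t *: g).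
Proof.
case=> c ->; exists (fun i => t * c i); rewrite scaler_sumr.
by apply: eq_bigr => i _; rewrite scalerA.
Qed.

Lemma prefix_spanD e n g h :
  prefix_span e n g -> prefix_span e n h -> prefix_span e n (g + h).
Proof.
case=> c -> [d ->]; exists (fun i => c i + d i); rewrite -big_split.
by apply: eq_bigr => i _; rewrite scalerDl.
Qed.

Lemma prefix_spanS e n v :
  prefix_span e n.+1 v <-> exists f t, prefix_span e n f /\ v = f + t *: e n.
Proof.
split=> [[c ->]|[f [t [[c ->] ->]]]].
  by exists (\sum_(i < n) c i *: e i), (c n); split; [exists c|rewrite big_ord_recr].
exists (fun i => if (i < n)%N then c i else t).
rewrite big_ord_recr /= ltnn; congr (_ + _).
by apply: eq_bigr => i _; rewrite ltn_ord.
Qed.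

Lemma prefix_span_subS e n : prefix_span e n `<=` prefix_span e n.+1.
Proof. by move=> v Sv; apply/prefix_spanS; exists v, 0; rewrite scale0r addr0. Qed.

Lemma prefix_span_mem e m n : (m < n)%N -> prefix_span e n (e m).
Proof.
move=> /subnK <-; elim: (n - m.+1)%N => [|k IH].
  apply/prefix_spanS; exists 0, 1; rewrite add0r scale1r.
  by split; first exact: prefix_span0.
by rewrite addSn; apply: prefix_span_subS.
Qed.

Lemma prefix_span_coord_bound (e : nat -> V) n :
  bounded_seq_compact (prefix_span e n) -> ~ prefix_span e n (e n) ->
  exists2 d, 0 < d & forall f t, prefix_span e n f -> `|t| * d <= `|f + t *: e n|.
Proof.
move=> Scpt en; have [d d0 dP] := bounded_seq_compact_dist_gt0 Scpt en.
exists d => // f t Sf; have [->|t0] := eqVneq t 0; first by rewrite normr0 mul0r.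
have -> : f + t *: e n = t *: (e n - (- t^-1) *: f).
  by rewrite scalerBr scalerA mulrN divff // scaleNr opprK scale1r addrC.
by rewrite normrZ ler_wpM2l // dP //; apply: prefix_spanZ.
Qed.

Lemma bounded_seq_compact_prefix_spanS (e : nat -> V) n :
  bounded_seq_compact (prefix_span e n) -> bounded_seq_compact (prefix_span e n.+1).
Proof.
move=> Scpt w B Sw wB; have [en|en] := pselect (prefix_span e n (e n)).
  have Sw' k : prefix_span e n (w k).
    have /prefix_spanS[f [t [Sf ->]]] := Sw k.
    by apply: prefix_spanD => //; apply: prefix_spanZ.
  have [phi iphi [z Sz wz]] := Scpt w B Sw' wB.
  by exists phi => //; exists z => //; apply: prefix_span_subS.
have [d d0 dP] := prefix_span_coord_bound Scpt en.
have dec k : exists p : V * R, prefix_span e n p.1 /\ w k = p.1 + p.2 *: e n.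
  by have /prefix_spanS[f [t ft]] := Sw k; exists (f, t).
have [p pP] := choice dec; pose f k := (p k).1; pose t k := (p k).2.
have tB k : `|t k| <= B / d.
  by rewrite ler_pdivlMr // (le_trans (dP _ _ (pP k).1)) // -(pP k).2.
have [phi1 iphi1 [T tT]] := bolzano_weierstrass_real tB.
have fB k : `|(f \o phi1) k| <= B + B / d * `|e n|.
  rewrite /= -[f _](addrK (t (phi1 k) *: e n)) -(pP _).2.
  by rewrite (le_trans (ler_normB _ _)) // lerD // normrZ ler_wpM2r.
have [phi2 iphi2 [z Sz fz]] := Scpt _ _ (fun k => (pP _).1) fB.
exists (phi1 \o phi2); first exact: increasing_seq_comp.
exists (z + T *: e n); first by apply/prefix_spanS; exists z, T.
have -> : w \o (phi1 \o phi2) =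
    (f \o phi1 \o phi2) + (fun k => (t \o phi1 \o phi2) k *: e n).
  by apply/funext => k /=; rewrite (pP _).2.
by apply: cvgD => //; apply: cvgZ (cvg_cst _); apply: cvg_subseq.
Qed.

Lemma bounded_seq_compact_prefix_span (e : nat -> V) n :
  bounded_seq_compact (prefix_span e n).
Proof.
elim: n => [|n IH]; last exact: bounded_seq_compact_prefix_spanS.
move=> w B Sw _; exists id => //; exists 0; first exact: prefix_span0.
have -> : w \o id = fun=> 0.
  by apply/funext => k /=; have [c ->] := Sw k; rewrite big_ord0.
exact: cvg_cst.
Qed.

Lemma finite_dim_bounded_seq_compact : finite_dim V -> bounded_seq_compact [set: V].
Proof.
move=> [n [e eP]] w B _ wB.
pose ext (T : zmodType) (a : 'I_n -> T) k := if insub k is Some i then a i else 0.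
have Sw k : prefix_span (ext _ e) n (w k).
  have [c ->] := eP (w k); exists (ext _ c).
  by apply: eq_bigr => i _; rewrite /ext valK.
have [phi iphi [z _ wz]] := bounded_seq_compact_prefix_span Sw wB.
by exists phi => //; exists z.
Qed.

Lemma riesz_lemma (e : nat -> V) n z : ~ prefix_span e n z ->
  exists u, `|u| = 1 /\ forall g, prefix_span e n g -> 1 / 2 <= `|u - g|.
Proof.
move=> nz; have [d d0 dP] :=
  bounded_seq_compact_dist_gt0 (@bounded_seq_compact_prefix_span e n) nz.
pose E := [set `|z - g| | g in prefix_span e n]; pose D := inf E.
have E0 : E !=set0 by exists `|z - 0|, 0; first exact: prefix_span0.
have Elb : lbound E d by move=> _ [g Sg <-]; apply: dP.
have DP g : prefix_span e n g -> D <= `|z - g|.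
  by move=> Sg; apply: ge_inf; [exists d | exists g].
have D0 : 0 < D by apply: lt_le_trans d0 (lb_le_inf E0 Elb).
have [_ [g0 Sg0 <-] g0D] := inf_adherent D0 (conj E0 (ex_intro _ d Elb)).
set m := `|z - g0| in g0D; have m0 : 0 < m by apply: lt_le_trans D0 (DP _ Sg0).
exists (m^-1 *: (z - g0)); split=> [|g Sg].
  by rewrite normrZ gtr0_norm ?invr_gt0 // mulVf // gt_eqF.
have -> : m^-1 *: (z - g0) - g = m^-1 *: (z - (g0 + m *: g)).
  by rewrite !scalerBr scalerDr scalerA mulVf ?gt_eqF // scale1r opprD addrA.
rewrite normrZ gtr0_norm ?invr_gt0 // ler_pdivlMl //.
have := DP _ (prefix_spanD Sg0 (prefix_spanZ m Sg)); rewrite -/D; lra.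
Qed.

Definition riesz_seq (u : nat -> V) :=
  (forall n, `|u n| = 1) /\ forall n g, prefix_span u n g -> 1 / 2 <= `|u n - g|.

Lemma riesz_seq_exists : ~ finite_dim V -> exists u, riesz_seq u.
Proof.
move=> infdim.
have next (s : seq V) : exists v : V,
    `|v| = 1 /\ forall g, prefix_span (nth 0 s) (size s) g -> 1 / 2 <= `|v - g|.
  have [z nz] : exists z, ~ prefix_span (nth 0 s) (size s) z.
    apply: contrapT => allin; apply: infdim.
    exists (size s), (fun i : 'I_(size s) => nth 0 s i) => x.
    have [c ->] : prefix_span (nth 0 s) (size s) x.
      by apply: contrapT => nx; apply: allin; exists x.
    by exists (fun i : 'I_(size s) => c i).
  exact: riesz_lemma nz.
have [nx nxP] := choice next.
pose L n := iter n (fun s => rcons s (nx s)) [::].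
have sizeL n : size (L n) = n by elim: n => //= n IH; rewrite size_rcons IH.
have nthL n i : (i < n)%N -> nth 0 (L n) i = nx (L i).
  elim: n => // n IH; rewrite ltnS leq_eqVlt => /orP[/eqP ->|lt].
    by rewrite /= nth_rcons sizeL ltnn eqxx.
  by rewrite /= nth_rcons sizeL lt IH.
exists (fun n => nx (L n)); split=> [n|n g [c ->]]; first exact: (nxP _).1.
apply: (nxP (L n)).2; exists c; rewrite sizeL.
by apply: eq_bigr => i _; rewrite nthL.
Qed.

End FiniteDimension.

Section Dichotomy.
Variables (R : realType) (X : normedModType R).

Lemma unbounded_or_accumulation (M : set X) (b : X) :
  finite_dim X -> infinite_set M -> closed M ->
  (forall r, exists2 x, M x & r <= `|x - b|) \/
  exists2 c, M c & forall eps, 0 < eps ->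
    exists x, [/\ M x, 0 < `|x - c| & `|x - c| < eps].
Proof.
move=> fdX infM clM.
have [unb|bnd] := pselect (forall r, exists2 x, M x & r <= `|x - b|); first by left.
right; have [r rP] : exists r, forall x, M x -> `|x - b| < r.
  apply: contrapT => nr; apply: bnd => r; apply: contrapT => nx; apply: nr.
  by exists r => x Mx; rewrite ltNge; apply/negP => rx; apply: nx; exists x.
have /infiniteP/ppcard_leP[f] := infM.
have fM k : M (f k) by apply: funS.
have finj k l : f k = f l -> k = l by apply: (@inj _ _ _ f); rewrite ?in_setE.
have fB k : `|f k| <= `|b| + r.
  rewrite -[f k](subrK b) (le_trans (ler_normD _ _)) // addrC lerD2l.
  exact/ltW/rP/fM.
have [phi iphi [c _ fc]] := finite_dim_bounded_seq_compact fdX (fun=> I) fB.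
have Mc : M c by apply: (closed_cvg _ clM _ _ fc); apply: nearW => k; apply: fM.
exists c => // eps eps0.
have [N _ NP] := proj1 (cvgrPdist_lt _ _) fc eps eps0.
have [fN|fN] := eqVneq (f (phi N)) c; last first.
  exists (f (phi N)); split; rewrite // ?normr_gt0 ?subr_eq0 //.
  by rewrite distrC; apply: NP => /=.
exists (f (phi N.+1)); split=> //; last by rewrite distrC; apply: NP => /=.
rewrite normr_gt0 subr_eq0.
by rewrite -fN; apply/eqP => /finj/(increasing_seq_injective iphi)/esym/n_Sn.
Qed.

End Dichotomy.

Section Constants.
Variable R : realType.

Definition halfpow n : R := 2^-1 ^+ n.+1.
Definition slack n : R := halfpow n / 20.
Definition amp n : R := 1 - halfpow n.

Lemma halfpow_gt0 n : 0 < halfpow n.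
Proof. by rewrite exprn_gt0 // invr_gt0. Qed.

Lemma halfpowS n : halfpow n.+1 = halfpow n / 2.
Proof. by rewrite /halfpow exprS mulrC. Qed.

Lemma halfpow_le n : halfpow n <= 1 / 2.
Proof.
elim: n => [|n IH]; first by rewrite /halfpow expr1 mul1r.
by rewrite halfpowS; have := halfpow_gt0 n; lra.
Qed.

Lemma slack_gt0 n : 0 < slack n.
Proof. by rewrite divr_gt0 ?halfpow_gt0. Qed.

Lemma slack_le n : slack n <= 1 / 40.
Proof. by rewrite /slack; have := halfpow_le n; lra. Qed.

Lemma slack_sqr_le1 n : slack n ^+ 2 <= 1.
Proof. by rewrite expr_le1 ?(ltW (slack_gt0 n)) //; have := slack_le n; lra. Qed.

Lemma amp_ge0 n : 0 <= amp n.
Proof. by rewrite /amp; have := halfpow_le n; lra. Qed.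

Lemma amp_le1 n : amp n <= 1.
Proof. by rewrite /amp; have := halfpow_gt0 n; lra. Qed.

Lemma amp_slack_le1 n : amp n + slack n <= 1.
Proof. by rewrite /amp /slack; have := halfpow_gt0 n; lra. Qed.

Lemma amp_slack_ge n : 21 / 40 <= amp n + slack n.
Proof. by rewrite /amp /slack; have := halfpow_le n; lra. Qed.

Lemma amp_slack_lt n : amp n + slack n < amp n.+1 * (1 - slack n.+1).
Proof.
rewrite /amp /slack halfpowS; have := halfpow_gt0 n; have := halfpow_le n.
move: (halfpow n) => h h_le h_gt0; nra.
Qed.

Definition lacunary (t : nat -> R) := forall n m, n <> m ->
  3 * t m <= slack n ^+ 2 * t n \/ 3 * t n <= slack m ^+ 2 * t m.

Lemma lacunary_of_lt (t : nat -> R) :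
  (forall m n, (m < n)%N -> 3 * t m <= slack n ^+ 2 * t n) \/
  (forall m n, (m < n)%N -> 3 * t n <= slack m ^+ 2 * t m) -> lacunary t.
Proof.
move=> tlt n m /eqP; rewrite neq_ltn => /orP[] nm; case: tlt => tlt;
  by [left; exact: tlt | right; exact: tlt].
Qed.

Lemma lacunary_growth (t : nat -> R) : (forall n, 0 <= t n) ->
  (forall n, 3 * t n <= slack n.+1 ^+ 2 * t n.+1) -> lacunary t.
Proof.
move=> t_ge0 tS; apply: lacunary_of_lt; left => m [//|n] mn.
have /nondecreasing_seqP t_mono n' : t n' <= t n'.+1.
  have := tS n'; have := ler_piMl (t_ge0 n'.+1) (slack_sqr_le1 n'.+1).
  have := t_ge0 n'; lra.
by apply: le_trans (tS n); rewrite ler_pM2l // t_mono.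
Qed.

Lemma lacunary_decay (t : nat -> R) : (forall n, 0 <= t n) ->
  (forall n, 3 * t n.+1 <= slack n ^+ 2 * t n) -> lacunary t.
Proof.
move=> t_ge0 tS; apply: lacunary_of_lt; right => m n mn.
have /nonincreasing_seqP t_anti n' : t n'.+1 <= t n'.
  have := tS n'; have := ler_piMl (t_ge0 n') (slack_sqr_le1 n').
  have := t_ge0 n'.+1; lra.
by apply: le_trans (tS m); rewrite ler_pM2l // t_anti.
Qed.

End Constants.
Arguments halfpow {R} n.
Arguments slack {R} n.
Arguments amp {R} n.

Lemma dependent_seq (T : Type) (A : set T) (P : nat -> T -> T -> Prop) (x0 : T) :
  A x0 -> (forall n x, A x -> exists2 y, A y & P n x y) ->
  exists x : nat -> T, (forall n, A (x n)) /\ forall n, P n (x n) (x n.+1).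
Proof.
move=> Ax0 step.
have step' (p : nat * T) : exists y, A p.2 -> A y /\ P p.1 p.2 y.
  have [/(step p.1)[y Ay Py]|nA] := pselect (A p.2); first by exists y.
  by exists x0 => /nA.
have [g gP] := choice step'.
pose x := fix x n := if n is k.+1 then g (k, x k) else x0.
have Ax n : A (x n) by elim: n => //= n /(gP (n, _))[].
by exists x; split=> // n; have [] := gP (n, x n) (Ax n).
Qed.

Section LacunarySequences.
Variables (R : realType) (X : normedModType R) (M : set X) (c : X).

Let punctured := [set y | M y /\ 0 < `|y - c|].

Lemma growing_lacunary_seq : (forall r, exists2 x, M x & r <= `|x - c|) ->
  exists x : nat -> X, (forall n, punctured (x n)) /\ lacunary (fun n => `|x n - c|).
Proof.
move=> unb; have [x0 Mx0 x0c] := unb 1.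
have Px0 : punctured x0 by split=> //; apply: lt_le_trans x0c.
have step n y : punctured y ->
    exists2 z, punctured z & 3 * `|y - c| <= slack n.+1 ^+ 2 * `|z - c|.
  move=> _; set s := slack n.+1 ^+ 2.
  have s0 : 0 < s by rewrite exprn_gt0 ?slack_gt0.
  have [z Mz zc] := unb (3 * `|y - c| / s + 1).
  have y3 : 0 <= 3 * `|y - c| / s.
    by apply: divr_ge0; [have := normr_ge0 (y - c); lra | exact: ltW].
  exists z; first by split=> //; lra.
  by rewrite -ler_pdivrMl // [s^-1 * _]mulrC; lra.
have [x [xP xS]] := dependent_seq Px0 step.
by exists x; split=> //; apply: lacunary_growth.
Qed.

Lemma shrinking_lacunary_seq :
  (forall eps, 0 < eps -> exists x, [/\ M x, 0 < `|x - c| & `|x - c| < eps]) ->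
  exists x : nat -> X, (forall n, punctured (x n)) /\ lacunary (fun n => `|x n - c|).
Proof.
move=> acc; have [x0 [Mx0 x0c _]] := acc 1 ltr01.
have step n y : punctured y ->
    exists2 z, punctured z & 3 * `|z - c| <= slack n ^+ 2 * `|y - c|.
  move=> [_ yc]; set s := slack n ^+ 2.
  have s0 : 0 < s by rewrite exprn_gt0 ?slack_gt0.
  have e0 : 0 < s * `|y - c| / 3 by apply: divr_gt0; [exact: mulr_gt0 | lra].
  have [z [Mz zc zy]] := acc _ e0.
  by exists z => //; lra.
have [x [xP xS]] := @dependent_seq _ _ _ x0 (conj Mx0 x0c) step.
by exists x; split=> //; apply: lacunary_decay.
Qed.

End LacunarySequences.

Lemma lacunary_seq_exists (R : realType) (X : normedModType R) (M : set X) (b : X) :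
  finite_dim X -> infinite_set M -> closed M -> M b ->
  exists c (x : nat -> X), [/\ M c, forall n, M (x n) /\ 0 < `|x n - c|
                            & lacunary (fun n => `|x n - c|)].
Proof.
move=> fdX infM clM Mb.
have [unb|[c Mc acc]] := unbounded_or_accumulation b fdX infM clM.
  by have [x [xM xS]] := growing_lacunary_seq unb; exists b, x.
by have [x [xM xS]] := shrinking_lacunary_seq acc; exists c, x.
Qed.

Section AlmostOnAxis.
Variables (R : realType) (Y : normedModType R) (u : nat -> Y).

Definition almost_on_axis (v : Y) := exists k (g : R) (e : Y),
  [/\ v = g *: u k + e, `|g| <= amp k & `|e| <= slack k].

Hypothesis u1 : forall n, `|u n| = 1.

Lemma norm_scale_axis (g : R) k : `|g *: u k| = `|g|.
Proof. by rewrite normrZ u1 mulr1. Qed.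

Lemma almost_on_axis_le1 v : almost_on_axis v -> `|v| <= 1.
Proof.
move=> [k [g [e [-> gk ek]]]]; rewrite (le_trans (ler_normD _ _)) //.
by rewrite norm_scale_axis; have := amp_slack_le1 R k; lra.
Qed.

Lemma almost_on_axis_axis k (g : R) : `|g| <= amp k -> almost_on_axis (g *: u k).
Proof. by move=> gk; exists k, g, 0; rewrite addr0 normr0 (ltW (slack_gt0 _ _)). Qed.

Lemma almost_on_axis_diff i j (a b : R) :
  0 <= a <= amp i -> 0 <= b <= amp j -> b <= slack i \/ a <= slack j ->
  almost_on_axis (a *: u i - b *: u j).
Proof.
move=> /andP[a0 ai] /andP[b0 bj] [bi|aj].
  by exists i, a, (- (b *: u j)); rewrite normrN norm_scale_axis !ger0_norm.
exists j, (- b), (a *: u i); rewrite norm_scale_axis normrN !ger0_norm //.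
by rewrite scaleNr addrC.
Qed.

End AlmostOnAxis.

Section RieszSequence.
Variables (R : realType) (Y : normedModType R) (u : nat -> Y).
Hypothesis u_riesz : riesz_seq u.

Lemma riesz_seq_sep k k' (g g' a : R) : k <> k' -> a <= `|g| -> a <= `|g'| ->
  a / 2 <= `|g *: u k - g' *: u k'|.
Proof.
wlog lt_k'k : k k' g g' / (k' < k)%N.
  move=> wlg kk' ag ag'; have [k'k|kk'_lt|k'k] := ltngtP k' k; first exact: wlg.
    by rewrite distrC; apply: wlg => // /esym.
  by move/esym: k'k.
move=> _ ag _; have [g0|g0] := eqVneq g 0.
  by move: ag; rewrite g0 normr0 => a0; apply: le_trans (normr_ge0 _); lra.
have -> : g *: u k - g' *: u k' = g *: (u k - (g' / g) *: u k').
  by rewrite scalerBr scalerA mulrCA divff // mulr1.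
have := u_riesz.2 k _ (prefix_spanZ (g' / g) (prefix_span_mem u lt_k'k)).
rewrite normrZ.
by have := normr_ge0 g; nra.
Qed.

Lemma almost_on_axis_not_cvg (Q : nat -> Y) (y : Y) :
  (forall k, almost_on_axis u (Q k)) -> (forall n, amp n + slack n < `|y|) ->
  ~ Q @ \oo --> y.
Proof.
move=> QP yP Qy.
have near_y eps : 0 < eps -> exists N, forall k, (N <= k)%N -> `|y - Q k| < eps.
  by move=> eps0; have [N _ NP] := proj1 (cvgrPdist_lt _ _) Qy eps eps0; exists N.
have u1 := u_riesz.1.
have coef_ge k g e : `|e| <= slack k -> `|y - (g *: u k + e)| < 1 / 40 ->
    19 / 40 <= `|g|.
  move=> ek yQ; have := ler_normD (y - (g *: u k + e)) (g *: u k + e).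
  rewrite subrK; have := ler_normD (g *: u k) e; rewrite norm_scale_axis //.
  by have := yP k; have := amp_slack_ge R k; have := slack_le R k; lra.
have [K KP] := near_y (1 / 40) ltac:(lra).
have [k [g [e [QK gk ek]]]] := QP K.
have [L LP] := near_y (`|y| - (amp k + slack k)) ltac:(have := yP k; lra).
have [k' [g' [e' [QL gk' ek']]]] := QP (maxn K L).
have yQK := KP K (leqnn K); have yQL := KP _ (leq_maxl K L).
have kk' : k <> k'.
  move=> kk'; subst k'; have := LP _ (leq_maxr K L).
  have := ler_normD (y - Q (maxn K L)) (Q (maxn K L)); rewrite subrK QL.
  by have := ler_normD (g' *: u k) e'; rewrite norm_scale_axis //; lra.
have gK : 19 / 40 <= `|g| by apply: coef_ge ek _; rewrite -QK.
have gL : 19 / 40 <= `|g'| by apply: coef_ge ek' _; rewrite -QL.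
have := riesz_seq_sep kk' gK gL.
have -> : g *: u k - g' *: u k' = (Q K - Q (maxn K L)) - (e - e').
  by rewrite QK QL opprD addrACA addrK.
have := ler_distD y (Q K) (Q (maxn K L)); rewrite [`|Q K - y|]distrC.
have := ler_normB e e'; have := ler_normB (Q K - Q (maxn K L)) (e - e').
by have := slack_le R k; have := slack_le R k'; lra.
Qed.

End RieszSequence.

Lemma max0_lipschitz (R : realDomainType) (a b : R) :
  `|Num.max 0 a - Num.max 0 b| <= `|a - b|.
Proof.
have := ler_norm (a - b); have := ler_norm (b - a); rewrite distrC ler_norml.
by case: (leP a 0) => a0; case: (leP b 0) => b0;
  rewrite ?(max_l a0) ?(max_l b0) ?(max_r (ltW a0)) ?(max_r (ltW b0)); lra.
Qed.

Section Bumps.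
Variables (R : realType) (X Y : normedModType R).
Variables (u : nat -> Y) (c : X) (x : nat -> X).
Hypothesis u1 : forall n, `|u n| = 1.
Hypothesis x_neq : forall n, 0 < `|x n - c|.
Hypothesis x_lac : lacunary (fun n => `|x n - c|).

Local Notation t n := `|x n - c|.

Definition bump_radius n := (1 - slack n) * t n.
Definition in_bump n p := `|p - x n| < bump_radius n.
Definition bump n p := amp n * Num.max 0 (bump_radius n - `|p - x n|).

Lemma bump_radius_gt0 n : 0 < bump_radius n.
Proof. by rewrite mulr_gt0 //; have := slack_le R n; lra. Qed.

Lemma bump_radius_le n : bump_radius n <= t n.
Proof. by rewrite /bump_radius; have := slack_gt0 R n; have := x_neq n; nra. Qed.

Lemma bump_ge0 n p : 0 <= bump n p.
Proof. by rewrite mulr_ge0 ?amp_ge0 // le_max lexx. Qed.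

Lemma bump_out n p : ~ in_bump n p -> bump n p = 0.
Proof.
by move/negP; rewrite -leNgt -subr_le0 /bump => /max_l ->; rewrite mulr0.
Qed.

Lemma bump_lipschitz n p q : `|bump n p - bump n q| <= amp n * `|p - q|.
Proof.
rewrite -mulrBr normrM ger0_norm ?amp_ge0 // ler_wpM2l ?amp_ge0 //.
apply: le_trans (max0_lipschitz _ _) _.
rewrite opprB addrC subrKA; apply: le_trans (ler_dist_dist _ _) _.
by rewrite opprB subrKA distrC.
Qed.

Lemma bump_le n p : bump n p <= t n.
Proof.
have m_le : Num.max 0 (bump_radius n - `|p - x n|) <= bump_radius n.
  rewrite ge_max (ltW (bump_radius_gt0 n)) /=.
  by have := normr_ge0 (p - x n); lra.
apply: le_trans (bump_radius_le n); apply: le_trans m_le.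
by rewrite ler_piMl ?amp_le1 // le_max lexx.
Qed.

Lemma in_bump_dist n p : in_bump n p -> slack n * t n < `|p - c| < 2 * t n.
Proof.
rewrite /in_bump /bump_radius => pn; have := bump_radius_le n.
have := ler_distD p (x n) c; have := ler_distD (x n) p c.
by rewrite [`|x n - p|]distrC /bump_radius; lra.
Qed.

Lemma in_bump_far n m p q : 3 * t m <= slack n ^+ 2 * t n ->
  in_bump n p -> in_bump m q -> t m <= slack n * `|p - q|.
Proof.
move=> sep /in_bump_dist/andP[pc _] /in_bump_dist/andP[_ qc].
have s0 := slack_gt0 R n; have s1 := slack_le R n; have tm0 := x_neq m.
have := ler_distD q p c; rewrite expr2 in sep; nra.
Qed.

Lemma in_bump_inj n m p : in_bump n p -> in_bump m p -> n = m.
Proof.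
move=> np mp; apply: contrapT => /x_lac[] sep.
  by have := in_bump_far sep np mp; rewrite subrr normr0 mulr0; have := x_neq m; lra.
by have := in_bump_far sep mp np; rewrite subrr normr0 mulr0; have := x_neq n; lra.
Qed.

Lemma bump_cross n m p q : n <> m ->
  bump m q <= slack n * `|p - q| \/ bump n p <= slack m * `|p - q|.
Proof.
have sd k : 0 <= slack k * `|p - q|.
  by rewrite mulr_ge0 ?normr_ge0 ?(ltW (slack_gt0 _ _)).
move=> /x_lac; have [np|/bump_out->] := pselect (in_bump n p); last by right.
have [mq|/bump_out->] := pselect (in_bump m q); last by left.
case=> sep; [left | right; rewrite distrC];
  exact: le_trans (bump_le _ _) (in_bump_far sep _ _).
Qed.

(* The balls are disjoint ([in_bump_inj]); off all of them the default index
   is harmless, every bump vanishing there. *)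
Definition bump_index p := xget 0%N [set n | in_bump n p].
Definition bump_map p := bump (bump_index p) p *: u (bump_index p).

Lemma bump_indexE n p : in_bump n p -> bump_index p = n.
Proof.
move=> np; apply/esym/(in_bump_inj np).
by apply: (xgetPex 0%N (P := [set n | in_bump n p])); exists n.
Qed.

Lemma bump_off_index n p : n <> bump_index p -> bump n p = 0.
Proof. by move=> ni; apply: bump_out => /bump_indexE ni'; apply: ni. Qed.

Lemma bump_le_of_out n p q : bump n q = 0 -> bump n p <= amp n * `|p - q|.
Proof.
by move=> q0; have := bump_lipschitz n p q; rewrite q0 subr0 ger0_norm ?bump_ge0.
Qed.

Lemma bump_map_slope p q : p <> q ->
  almost_on_axis u (`|p - q|^-1 *: (bump_map p - bump_map q)).
Proof.
move=> /eqP; rewrite -subr_eq0 -normr_gt0; set d := `|p - q| => d0.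
have divdP a b : (d^-1 * a <= b) = (a <= b * d) by rewrite ler_pdivrMl // mulrC.
have div_ge0 n p' : 0 <= d^-1 * bump n p'.
  by rewrite mulr_ge0 ?bump_ge0 ?invr_ge0 ?(ltW d0).
rewrite /bump_map; set i := bump_index p; set j := bump_index q.
have [<-|/eqP ij] := eqVneq i j.
  rewrite -scalerBl scalerA; apply: almost_on_axis_axis => //.
  by rewrite normrM gtr0_norm ?invr_gt0 // divdP bump_lipschitz.
rewrite scalerBr !scalerA; apply: almost_on_axis_diff => //.
- by rewrite div_ge0 divdP bump_le_of_out // bump_off_index.
- rewrite div_ge0 divdP /d distrC bump_le_of_out // bump_off_index //.
  by move=> ji; apply: ij; rewrite ji.
- by rewrite !divdP; case: (bump_cross p q ij) => ?; [left | right].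
Qed.

Lemma bump_map_center : bump_map c = 0.
Proof.
rewrite /bump_map bump_out ?scale0r // /in_bump distrC; apply/negP.
by rewrite -leNgt bump_radius_le.
Qed.

Lemma bump_map_peak n : bump_map (x n) = (amp n * bump_radius n) *: u n.
Proof.
have nn : in_bump n (x n) by rewrite /in_bump subrr normr0 bump_radius_gt0.
rewrite /bump_map (bump_indexE nn) /bump subrr normr0 subr0.
by rewrite max_r ?(ltW (bump_radius_gt0 n)).
Qed.

End Bumps.

Section NotAttaining.
Variables (R : realType) (X Y : normedModType R) (M : set X) (b c : X).
Variables (u : nat -> Y) (x : nat -> X).
Hypothesis u_riesz : riesz_seq u.
Hypothesis Mc : M c.
Hypothesis x_punct : forall n, M (x n) /\ 0 < `|x n - c|.
Hypothesis x_lac : lacunary (fun n => `|x n - c|).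

Let F := bump_map u c x.
Let f p := F p - F b.

Let f_sub p q : f p - f q = F p - F q.
Proof. by rewrite /f opprB addrA subrK. Qed.

Let x_neq n : 0 < `|x n - c| := proj2 (x_punct n).
Let u1 : forall n, `|u n| = 1 := proj1 u_riesz.

Let slope p q : p <> q -> almost_on_axis u (`|p - q|^-1 *: (f p - f q)).
Proof. by rewrite f_sub; exact: (@bump_map_slope _ _ _ u c x u1 x_neq x_lac p q). Qed.

Let slope_norm p q : `|f p - f q| / `|p - q| = `| `|p - q|^-1 *: (f p - f q)|.
Proof. by rewrite normrZ ger0_norm ?invr_ge0 // mulrC. Qed.

Lemma bump_map_lip0 : Lip0 M b f.
Proof.
split=> [|]; first exact: subrr.
exists 1 => p q _ _.
have [->|pq] := eqVneq p q; first by rewrite !subrr !normr0 mulr0.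
have d0 : 0 < `|p - q| by rewrite normr_gt0 subr_eq0.
by rewrite -ler_pdivrMr // slope_norm (almost_on_axis_le1 u1 (slope (elimN eqP pq))).
Qed.

Lemma bump_map_slope_peak n : slopes M f (amp n * (1 - slack n)).
Proof.
exists (x n), c; split=> //; first exact: (x_punct n).1.
  by move=> xc; have := x_neq n; rewrite xc subrr normr0 ltxx.
rewrite f_sub /F (bump_map_center u x_neq) subr0 (bump_map_peak u x_neq x_lac).
rewrite normrZ u1 mulr1.
rewrite ger0_norm ?(mulr_ge0 (amp_ge0 _ n) (ltW (bump_radius_gt0 x_neq n))) //.
by rewrite /bump_radius mulrA mulfK // gt_eqF.
Qed.

Lemma bump_map_lipnorm_gt n : amp n + slack n < lipnorm M f.
Proof.
apply: lt_le_trans (amp_slack_lt R n) _; apply: sup_upper_bound; last first.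
  exact: bump_map_slope_peak.
split; first by exists (amp 0 * (1 - slack 0)); apply: bump_map_slope_peak.
exists 1 => _ [p [q [_ _ pq ->]]].
by rewrite slope_norm (almost_on_axis_le1 u1 (slope pq)).
Qed.

Lemma bump_map_not_NA : ~ NA M b f.
Proof.
move=> [_ [y [ylip [p [q [pqP pqy]]]]]].
apply: (almost_on_axis_not_cvg u_riesz _ _ pqy) => [k|n].
  by case: (pqP k) => _ _ /slope.
by rewrite ylip; apply: bump_map_lipnorm_gt.
Qed.

End NotAttaining.

Theorem corollary2p8 (R : realType) (X : normedModType R)
  (Y : completeNormedModType R) (M : set X) (b : X) :
  finite_dim X -> ~ finite_dim Y ->
  infinite_set M -> closed M -> M b ->
  NA (Y := Y) M b `<` Lip0 (Y := Y) M b.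
Proof.
move=> fdX infdimY infM clM Mb.
have [u u_riesz] := riesz_seq_exists infdimY.
have [c [x [Mc x_punct x_lac]]] := lacunary_seq_exists fdX infM clM Mb.
split=> [f [] // | Lip0_sub_NA].
exact: bump_map_not_NA u_riesz Mc x_punct x_lac
  (Lip0_sub_NA _ (bump_map_lip0 b u_riesz x_punct x_lac)).
Qed.
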